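(* Let $(\varepsilon_n)_n$ be a sequence of positive real numbers and $(\mathcal X_n)_n$ a sequence of m2m spaces $\mathcal X_n=(X_n,r_n,\nu_n)$ with $d_{2GP}(\mathcal X_n,\mathcal X_{n+1})<\varepsilon_n$ for every $n\in\mathbb N$. Then there are a complete separable metric space $(Z,r_Z)$ and isometric embeddings $\iota_n:X_n\to Z$, $n\in\mathbb N$, such that $d_P^{\mathcal M_f(Z)}(\iota_{n**}\nu_n,\iota_{n+1**}\nu_{n+1})<\varepsilon_n$ for all $n\in\mathbb N$.
   Context: For a Polish space $X$, $\mathcal M_f(X)$ is the set of finite Borel measures; $M_\nu(A)=\int\mu(A)\,d\nu(\mu)$; for measurable $g$, $g_*\mu=\mu\circ g^{-1}$, $g_{**}\nu=\nu\circ(g_* )^{-1}$. An m2m space is $(X,r,\nu)$, $X\subset\mathbb R^{\mathbb N}$ non-empty, $(X,r)$ complete separable metric, $\nu\in\mathcal M_f(\mathcal M_f(X))$; equivalence via measurable maps isometric on $\operatorname{supp}M_\nu$ with $\lambda=f_{**}\nu$. Prokhorov distance for finite measures on a metric space $(S,\rho)$: $d_P^S(\mu,\eta)=\inf\{\varepsilon>0:\mu(A)\le\eta(A^\varepsilon)+\varepsilon,\eta(A)\le\mu(A^\varepsilon)+\varepsilon\ \forall A\text{ closed}\}$, $A^\varepsilon$ the open $\varepsilon$-neighbourhood; $d_P^{\mathcal M_f(Z)}$ is the Prokhorov metric on finite measures on $(\mathcal M_f(Z),d_P^Z)$. $d_{2GP}((X,r,\nu),(Y,d,\lambda))=\inf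 d_P^{\mathcal M_f(Z)}(\iota_{X**}\nu,\iota_{Y**}\lambda)$ over complete separable metric spaces $Z$ and isometric embeddings $\iota_X:X\to Z,\iota_Y:Y\to Z$. *)

From HB Require Import structures.
From mathcomp Require Import all_boot all_order all_algebra.
From mathcomp Require Import all_classical all_reals.
From mathcomp Require Import topology normedtype sequences measure.
Set Implicit Arguments. Unset Strict Implicit. Unset Printing Implicit Defensive.
Import Order.TTheory GRing.Theory Num.Theory.
Import numFieldNormedType.Exports.
Local Open Scope classical_set_scope.
Local Open Scope ring_scope.

Section MetricNotions.
Context {R : realType} {T : Type} (d : T -> T -> R).

Definition is_metric : Prop :=
  [/\ (forall x y, d x y = 0 <-> x = y),
      (forall x y, d x y = d y x) &
      (forall x y z, d x z <= d x y + d y z)].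

Definition mball (x : T) (e : R) : set T := [set y | d x y < e].
Definition mopen (A : set T) : Prop :=
  forall x, A x -> exists e : R, 0 < e /\ mball x e `<=` A.
Definition mclosed (A : set T) : Prop := mopen (~` A).
Definition mnbhd (A : set T) (e : R) : set T :=
  [set y | exists2 x, A x & d x y < e].

Definition mborel (A : set T) : Prop := <<s mopen >> A.

Definition mcauchy (u : nat -> T) : Prop :=
  forall e : R, 0 < e -> exists N, forall m n, (N <= m)%N -> (N <= n)%N ->
    d (u m) (u n) < e.
Definition mconverges (u : nat -> T) (l : T) : Prop :=
  forall e : R, 0 < e -> exists N, forall n, (N <= n)%N -> d (u n) l < e.
Definition mcomplete : Prop :=
  forall u, mcauchy u -> exists l, mconverges u l.
Definition mseparable : Prop :=
  exists D : set T, countable D /\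
    forall x (e : R), 0 < e -> exists2 y, D y & d x y < e.

(* finite Borel measure, represented as a real-valued set function which is
   a (countably additive, nonnegative) measure on Borel sets and 0 off them *)
Definition is_fmeasure (mu : set T -> R) : Prop :=
  [/\ (forall A, ~ mborel A -> mu A = 0),
      mu set0 = 0,
      (forall A, mborel A -> 0 <= mu A) &
      (forall F : nat -> set T, (forall n, mborel (F n)) -> trivIset setT F ->
         (fun n => \sum_(0 <= i < n) mu (F i)) @ \oo --> mu (\bigcup_n F n))].

Definition mf := {mu : set T -> R | is_fmeasure mu}.

Definition prokhorov_ok (mu eta : set T -> R) (e : R) : Prop :=
  forall A, mclosed A ->
    mu A <= eta (mnbhd A e) + e /\ eta A <= mu (mnbhd A e) + e.
Definition dP (mu eta : set T -> R) : R :=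
  inf [set e : R | 0 < e /\ prokhorov_ok mu eta e].

End MetricNotions.

Definition dPm {R : realType} {T : Type} (d : T -> T -> R) : mf d -> mf d -> R :=
  fun m1 m2 => dP d (sval m1) (sval m2).
Arguments dPm {R T} d m1 m2.

Definition isometric {R : realType} {T U : Type} (dT : T -> T -> R)
  (dU : U -> U -> R) (f : T -> U) : Prop :=
  forall x y, dU (f x) (f y) = dT x y.

Definition push {R : realType} {T U : Type} (dU : U -> U -> R) (g : T -> U)
  (mu : set T -> R) : set U -> R :=
  fun A => if pselect (mborel dU A) then mu (g @^-1` A) else 0.

(* push2: g_{**} nu = nu o (g_{*})^-1 (on Borel sets of (M_f(U), d_P)) *)
Definition push2 {R : realType} {T U : Type} (dT : T -> T -> R)
  (dU : U -> U -> R) (g : T -> U) (nu : set (mf dT) -> R) : set (mf dU) -> R :=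
  fun B => if pselect (mborel (dPm dU) B)
           then nu [set m : mf dT | exists2 m' : mf dU, B m' &
                                      sval m' = push dU g (sval m)]
           else 0.

Arguments push {R T U} dU g mu _.
Arguments push2 {R T U} dT dU g nu _.
Arguments dP {R T} d mu eta.
Arguments isometric {R T U} dT dU f.

Definition pt {R : realType} (S : set (nat -> R)) := {x : nat -> R | S x}.

Record m2m (R : realType) := M2M {
  m2m_set : set (nat -> R);
  m2m_ne : m2m_set !=set0;
  m2m_r : pt m2m_set -> pt m2m_set -> R;
  m2m_metric : is_metric m2m_r;
  m2m_complete : mcomplete m2m_r;
  m2m_separable : mseparable m2m_r;
  m2m_nu : set (mf m2m_r) -> R;
  m2m_fm : is_fmeasure (dPm m2m_r) m2m_nu }.
Arguments m2m_set {R} m _.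
Arguments m2m_r {R} m _ _.
Arguments m2m_nu {R} m _.

Definition d2GP {R : realType} (X Y : m2m R) : R :=
  inf [set dd : R | exists (Z : Type) (dZ : Z -> Z -> R)
         (iX : pt (m2m_set X) -> Z) (iY : pt (m2m_set Y) -> Z),
         [/\ is_metric dZ, mcomplete dZ, mseparable dZ,
             isometric (m2m_r X) dZ iX /\ isometric (m2m_r Y) dZ iY &
             dd = dP (dPm dZ) (push2 (m2m_r X) dZ iX (m2m_nu X))
                              (push2 (m2m_r Y) dZ iY (m2m_nu Y))]].

(* For every n, d2GP (X n) (X n.+1) < eps n yields a complete separable metric space Z n
   containing isometric copies al n (X n) and be n (X n.+1) whose pushed-forward measures
   on measures are less than eps n apart in Prokhorov distance.  Glue the Z n along
   be n x ~ al n.+1 x: the glued distance of two points is the infimum of the costs of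
   chains that move inside a single Z n or jump for free across an identification.  A chain
   that leaves Z n must come back through the same gluing set, on which Z n and Z n.+1 induce
   the same metric (that of X n.+1), so the glued pseudometric restricts to the metric of each
   Z n; its completion is the space Z.  Pushing forward along a 1-Lipschitz map does not
   increase Prokhorov distances, neither between measures nor between measures on measures,
   so the bounds eps n survive the passage from Z n to Z. *)

From mathcomp Require Import all_boot all_order all_algebra.
From mathcomp Require Import all_classical all_reals.
From mathcomp Require Import topology normedtype sequences measure.
From mathcomp Require Import lra zify.
From Stdlib Require Import Eqdep_dec.
Set Implicit Arguments. Unset Strict Implicit. Unset Printing Implicit Defensive.
Import Order.TTheory GRing.Theory Num.Theory.
Import numFieldNormedType.Exports.
Local Open Scope classical_set_scope.
Local Open Scope ring_scope.

Definition is_pseudometric {R : realType} {T : Type} (d : T -> T -> R) : Prop :=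
  [/\ forall x, d x x = 0, forall x y, d x y = d y x &
      forall x y z, d x z <= d x y + d y z].

Lemma metric_pseudometric {R : realType} {T : Type} (d : T -> T -> R) :
  is_metric d -> is_pseudometric d.
Proof. by case=> d0 dC dD; split => // x; apply/d0. Qed.

Lemma pseudometric_ge0 {R : realType} {T : Type} (d : T -> T -> R) :
  is_pseudometric d -> forall x y, 0 <= d x y.
Proof. by case=> d0 dC dD x y; have := dD x y x; rewrite d0 (dC y x); lra. Qed.

Lemma isometric_le {R : realType} {T U : Type} (dT : T -> T -> R) (dU : U -> U -> R)
    (f : T -> U) :
  isometric dT dU f -> forall a b, dU (f a) (f b) <= dT a b.
Proof. by move=> f_iso a b; rewrite f_iso. Qed.

Section Borel.
Context {R : realType} {T : Type} (d : T -> T -> R).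

Lemma mopen_borel A : mopen d A -> mborel d A.
Proof. exact: sub_sigma_algebra. Qed.

Lemma mborel0 : mborel d set0.
Proof. exact: sigma_algebra0. Qed.

Lemma mborelC A : mborel d A -> mborel d (~` A).
Proof. by move=> bA; rewrite -setTD; apply: sigma_algebraCD. Qed.

Lemma mborel_bigcup (F : nat -> set T) :
  (forall n, mborel d (F n)) -> mborel d (\bigcup_n F n).
Proof. exact: sigma_algebra_bigcup. Qed.

Lemma mborelT : mborel d setT.
Proof. by rewrite -setC0; apply: mborelC; apply: mborel0. Qed.

Lemma mborelU A B : mborel d A -> mborel d B -> mborel d (A `|` B).
Proof.
by move=> bA bB; rewrite -bigcup2E; apply: mborel_bigcup => -[|[|n]] //=; apply: mborel0.
Qed.

Lemma mborelD A B : mborel d A -> mborel d B -> mborel d (A `\` B).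
Proof.
move=> bA bB; rewrite setDE -[A `&` _]setCK setCI setCK.
by apply: mborelC; apply: mborelU => //; apply: mborelC.
Qed.

Lemma mclosed_borel A : mclosed d A -> mborel d A.
Proof. by move=> cA; rewrite -[A]setCK; apply: mborelC; apply: mopen_borel. Qed.

Hypothesis dD : forall x y z, d x z <= d x y + d y z.

Lemma mnbhd_open A e : mopen d (mnbhd d A e).
Proof.
move=> y [x Ax dxy]; exists (e - d x y); split; first by rewrite subr_gt0.
by move=> z dyz; exists x => //; apply: (le_lt_trans (dD x y z)); rewrite -ltrBrDl.
Qed.

Lemma mnbhd_borel A e : mborel d (mnbhd d A e).
Proof. by apply: mopen_borel; apply: mnbhd_open. Qed.

End Borel.

Section FiniteMeasure.
Context {R : realType} {T : Type} (d : T -> T -> R) (mu : set T -> R).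
Hypothesis mu_fm : is_fmeasure d mu.

Lemma fmeasure_ge0 A : 0 <= mu A.
Proof.
case: mu_fm => mu_out _ mu_ge0 _.
by have [/mu_ge0 //|/mu_out ->] := pselect (mborel d A).
Qed.

Lemma fmeasure_sum_le (F : nat -> set T) n :
  (forall n, mborel d (F n)) -> trivIset setT F ->
  \sum_(0 <= i < n) mu (F i) <= mu (\bigcup_n F n).
Proof.
move=> bF tF; case: mu_fm => _ _ _ /(_ F bF tF) cvF.
rewrite -(cvg_lim (@Rhausdorff R) cvF).
apply: nondecreasing_cvgn_le; last by apply/cvg_ex; exists (mu (\bigcup_n F n)).
by apply/nondecreasing_seqP => k; rewrite big_nat_recr //= lerDl fmeasure_ge0.
Qed.

Lemma le_fmeasure A B : mborel d A -> mborel d B -> A `<=` B -> mu A <= mu B.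
Proof.
move=> bA bB AB.
have bF : forall n, mborel d (bigcup2 A (B `\` A) n).
  by case=> [|[|n]] //=; [apply: mborelD | apply: mborel0].
have := fmeasure_sum_le 2 bF; rewrite -trivIset_bigcup2 setDIK bigcup2E setDUK //.
rewrite !big_nat_recr //= big_geq // add0r => /(_ erefl); apply/le_trans.
by rewrite lerDl fmeasure_ge0.
Qed.

Lemma fmeasure_le_setT A : mu A <= mu setT.
Proof.
have [bA|nbA] := pselect (mborel d A); first by apply: le_fmeasure => //; apply: mborelT.
by case: mu_fm => mu_out _ _ _; rewrite mu_out // fmeasure_ge0.
Qed.

End FiniteMeasure.

Section Prokhorov.
Context {R : realType} {T : Type} (d : T -> T -> R).

Lemma dP_le (mu eta : set T -> R) e :
  0 < e -> prokhorov_ok d mu eta e -> dP d mu eta <= e.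
Proof. by move=> e0 ok; apply: ge_inf => //; exists 0 => x [/ltW]. Qed.

Lemma prokhorov_set_neq0 (mu eta : set T -> R) :
  is_fmeasure d mu -> is_fmeasure d eta ->
  [set e : R | 0 < e /\ prokhorov_ok d mu eta e] !=set0.
Proof.
move=> fmu feta; have mu_ge0 := fmeasure_ge0 fmu; have eta_ge0 := fmeasure_ge0 feta.
have := mu_ge0 setT; have := eta_ge0 setT; pose e := mu setT + eta setT + 1 => ? ?.
exists e; split => [|A _]; first by rewrite /e; lra.
have := fmeasure_le_setT fmu A; have := fmeasure_le_setT feta A.
have := mu_ge0 (mnbhd d A e); have := eta_ge0 (mnbhd d A e); rewrite /e; split; lra.
Qed.

Lemma dP_lt (mu eta : set T -> R) e :
  is_fmeasure d mu -> is_fmeasure d eta -> dP d mu eta < e ->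
  exists2 e', 0 < e' /\ prokhorov_ok d mu eta e' & e' < e.
Proof. by move=> fmu feta /(inf_lt (prokhorov_set_neq0 fmu feta)). Qed.

Hypotheses (d0 : forall x, d x x = 0) (dC : forall x y, d x y = d y x)
  (dD : forall x y z, d x z <= d x y + d y z).

Definition mclosure (A : set T) : set T :=
  [set y | forall e, 0 < e -> exists2 x, A x & d x y < e].

Lemma mclosure_closed A : mclosed d (mclosure A).
Proof.
move=> y /= /existsNP[e /not_implyP[e0 /forall2NP far]].
exists (e / 2); split => [|z dyz Az]; first lra.
have [|x Ax dxz] := Az (e / 2); first lra.
have [//|/negP] := far x; rewrite -leNgt => exy.
have := dD x z y; rewrite /mball /= dC in dyz; lra.
Qed.

Lemma sub_mclosure A : A `<=` mclosure A.
Proof. by move=> x Ax e e0; exists x; rewrite ?d0. Qed.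

Lemma mnbhd_mclosure A e1 e2 :
  mnbhd d (mclosure (mnbhd d A e1)) e2 `<=` mnbhd d A (e1 + e2).
Proof.
move=> z [y Ay dyz]; have [|w [x Ax dxw] dwy] := Ay (e2 - d y z); first by rewrite subr_gt0.
by exists x => //; have := dD x w z; have := dD w y z; lra.
Qed.

Lemma prokhorov_half_trans (mu eta la : set T -> R) e1 e2 :
  is_fmeasure d eta -> is_fmeasure d la ->
  (forall A, mclosed d A -> mu A <= eta (mnbhd d A e1) + e1) ->
  (forall A, mclosed d A -> eta A <= la (mnbhd d A e2) + e2) ->
  forall A, mclosed d A -> mu A <= la (mnbhd d A (e1 + e2)) + (e1 + e2).
Proof.
move=> feta fla ok1 ok2 A cA; have h1 := ok1 A cA.
(* A^e1 is open, so the second estimate is applied to its closure *)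
have bN := mnbhd_borel dD; have cl := @mclosure_closed (mnbhd d A e1).
have h2 : eta (mnbhd d A e1) <= eta (mclosure (mnbhd d A e1)).
  apply: (le_fmeasure feta); [exact: bN | exact: mclosed_borel | exact: sub_mclosure].
have h3 : la (mnbhd d (mclosure (mnbhd d A e1)) e2) <= la (mnbhd d A (e1 + e2)).
  apply: (le_fmeasure fla); [exact: bN | exact: bN | exact: mnbhd_mclosure].
have := ok2 _ cl; lra.
Qed.

Lemma prokhorov_ok_trans (mu eta la : set T -> R) e1 e2 :
  is_fmeasure d mu -> is_fmeasure d eta -> is_fmeasure d la ->
  prokhorov_ok d mu eta e1 -> prokhorov_ok d eta la e2 ->
  prokhorov_ok d mu la (e1 + e2).
Proof.
move=> fmu feta fla ok1 ok2 A cA; split.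
  apply: (prokhorov_half_trans feta fla _ _ cA) => B cB.
    exact: (ok1 B cB).1.
  exact: (ok2 B cB).1.
rewrite [e1 + e2]addrC; apply: (prokhorov_half_trans feta fmu _ _ cA) => B cB.
  exact: (ok2 B cB).2.
exact: (ok1 B cB).2.
Qed.

Lemma dP_triangle (mu eta la : set T -> R) :
  is_fmeasure d mu -> is_fmeasure d eta -> is_fmeasure d la ->
  dP d mu la <= dP d mu eta + dP d eta la.
Proof.
move=> fmu feta fla; apply/ler_addgt0Pr => e e0.
have /(dP_lt fmu feta) [e1 [e10 ok1] lt1] : dP d mu eta < dP d mu eta + e / 2 by lra.
have /(dP_lt feta fla) [e2 [e20 ok2] lt2] : dP d eta la < dP d eta la + e / 2 by lra.
have := dP_le (addr_gt0 e10 e20) (prokhorov_ok_trans fmu feta fla ok1 ok2); lra.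
Qed.

End Prokhorov.

Section Pushforward.
Context {R : realType} {T U : Type} (dT : T -> T -> R) (dU : U -> U -> R) (f : T -> U).
Hypothesis f_nonexpanding : forall a b, dU (f a) (f b) <= dT a b.

Lemma preimage_mopen A : mopen dU A -> mopen dT (f @^-1` A).
Proof.
move=> oA x Afx; have [e [e0 sub]] := oA _ Afx; exists e; split => // y dxy.
by apply: sub; apply: le_lt_trans dxy.
Qed.

Lemma preimage_mclosed A : mclosed dU A -> mclosed dT (f @^-1` A).
Proof. by move=> cA; rewrite /mclosed preimage_setC; apply: preimage_mopen. Qed.

Lemma preimage_mborel A : mborel dU A -> mborel dT (f @^-1` A).
Proof.
apply: (@smallest_sub _ _ _ [set B | mborel dT (f @^-1` B)]); last first.
  by move=> B oB; apply: mopen_borel; apply: preimage_mopen.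
split => /=; first by rewrite preimage_set0; apply: mborel0.
  by move=> B bB; rewrite setTD -preimage_setC; apply: mborelC.
by move=> F bF; rewrite preimage_bigcup; apply: mborel_bigcup.
Qed.

Lemma mnbhd_preimage A e : mnbhd dT (f @^-1` A) e `<=` f @^-1` mnbhd dU A e.
Proof. by move=> y [x Ax dxy]; exists (f x) => //; apply: le_lt_trans dxy. Qed.

Lemma pushE (mu : set T -> R) A : mborel dU A -> push dU f mu A = mu (f @^-1` A).
Proof. by rewrite /push; case: pselect. Qed.

Lemma push_fmeasure (mu : set T -> R) :
  is_fmeasure dT mu -> is_fmeasure dU (push dU f mu).
Proof.
case=> mu_out mu0 mu_ge0 mu_sum; split.
- by move=> A nA; rewrite /push; case: pselect.
- by rewrite pushE ?preimage_set0 //; apply: mborel0.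
- by move=> A bA; rewrite pushE //; apply: mu_ge0; apply: preimage_mborel.
move=> F bF tF; rewrite pushE; last exact: mborel_bigcup.
have -> : (fun n => \sum_(0 <= i < n) push dU f mu (F i)) =
          (fun n => \sum_(0 <= i < n) mu (f @^-1` F i)).
  by apply: funext => n; apply: eq_bigr => i _; rewrite pushE.
rewrite preimage_bigcup; apply: mu_sum => [n|i j _ _ [x [Fi Fj]]].
  exact: preimage_mborel.
by apply: tF => //; exists (f x).
Qed.

Hypotheses (dT_triangle : forall x y z, dT x z <= dT x y + dT y z)
  (dU_triangle : forall x y z, dU x z <= dU x y + dU y z).

Lemma prokhorov_ok_push (mu eta : set T -> R) e :
  is_fmeasure dT mu -> is_fmeasure dT eta ->
  prokhorov_ok dT mu eta e -> prokhorov_ok dU (push dU f mu) (push dU f eta) e.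
Proof.
move=> fmu feta ok A cA; have [h1 h2] := ok _ (preimage_mclosed cA).
have bN := mnbhd_borel dU_triangle A e.
have sub (nu : set T -> R) : is_fmeasure dT nu ->
    nu (mnbhd dT (f @^-1` A) e) <= nu (f @^-1` mnbhd dU A e).
  move=> fnu; apply: (le_fmeasure fnu); last exact: mnbhd_preimage.
    exact: mnbhd_borel.
  exact: preimage_mborel.
have bA := mclosed_borel cA; rewrite !pushE //.
by have := sub _ fmu; have := sub _ feta; split; lra.
Qed.

Lemma dP_push_le (mu eta : set T -> R) :
  is_fmeasure dT mu -> is_fmeasure dT eta ->
  dP dU (push dU f mu) (push dU f eta) <= dP dT mu eta.
Proof.
move=> fmu feta; apply: lb_le_inf; first exact: prokhorov_set_neq0.
by move=> e [e0 ok]; apply: dP_le => //; apply: prokhorov_ok_push.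
Qed.

Definition push_mf (m : mf dT) : mf dU :=
  exist _ (push dU f (sval m)) (push_fmeasure (svalP m)).

Lemma dPm_push_mf_le m1 m2 : dPm dU (push_mf m1) (push_mf m2) <= dPm dT m1 m2.
Proof. by apply: dP_push_le; apply: svalP. Qed.

Lemma push2E (nu : set (mf dT) -> R) : push2 dT dU f nu = push (dPm dU) push_mf nu.
Proof.
apply: funext => B; rewrite /push2 /push; case: pselect => // bB.
congr nu; apply/seteqP; split => m /=; last by exists (push_mf m).
by case=> m' Bm' e; have -> : push_mf m = m' by apply/eq_sig_hprop/esym.
Qed.

End Pushforward.

Lemma push_comp {R : realType} {T U V : Type} (dU : U -> U -> R) (dV : V -> V -> R)
    (f : T -> U) (g : U -> V) (mu : set T -> R) :
  (forall a b, dV (g a) (g b) <= dU a b) ->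
  push dV g (push dU f mu) = push dV (g \o f) mu.
Proof.
move=> g_le; apply: funext => B; rewrite /push; case: (pselect (mborel dV B)) => // bB.
by case: pselect => // -[]; apply: preimage_mborel bB.
Qed.

Section PushforwardComp.
Context {R : realType} {T U V : Type}
  (dT : T -> T -> R) (dU : U -> U -> R) (dV : V -> V -> R)
  (f : T -> U) (g : U -> V).
Hypotheses (f_le : forall a b, dU (f a) (f b) <= dT a b)
  (g_le : forall a b, dV (g a) (g b) <= dU a b).

Lemma push_mf_comp (gf_le : forall a b, dV ((g \o f) a) ((g \o f) b) <= dT a b) :
  push_mf gf_le = push_mf g_le \o push_mf f_le.
Proof. by apply: funext => m; apply: eq_sig_hprop => //=; rewrite push_comp. Qed.

Hypotheses (dU_triangle : forall x y z, dU x z <= dU x y + dU y z)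
  (dV_triangle : forall x y z, dV x z <= dV x y + dV y z).

Lemma push2_comp (nu : set (mf dT) -> R) :
  push2 dT dV (g \o f) nu = push (dPm dV) (push_mf g_le) (push2 dT dU f nu).
Proof.
have gf_le a b : dV ((g \o f) a) ((g \o f) b) <= dT a b.
  exact: le_trans (g_le _ _) (f_le _ _).
rewrite (push2E gf_le) (push2E f_le) push_comp ?push_mf_comp //.
exact: dPm_push_mf_le.
Qed.

End PushforwardComp.

Lemma dPm_triangle {R : realType} {T : Type} (d : T -> T -> R) :
  is_pseudometric d -> forall m1 m2 m3 : mf d, dPm d m1 m3 <= dPm d m1 m2 + dPm d m2 m3.
Proof. by case=> d0 dC dD m1 m2 m3; apply: dP_triangle => //; apply: svalP. Qed.

Lemma dP_push2_comp_le {R : realType} {T1 T2 U V : Type}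
    (d1 : T1 -> T1 -> R) (d2 : T2 -> T2 -> R) (dU : U -> U -> R) (dV : V -> V -> R)
    (f1 : T1 -> U) (f2 : T2 -> U) (g : U -> V)
    (nu1 : set (mf d1) -> R) (nu2 : set (mf d2) -> R) :
  is_pseudometric d1 -> is_pseudometric d2 ->
  is_pseudometric dU -> is_pseudometric dV ->
  is_fmeasure (dPm d1) nu1 -> is_fmeasure (dPm d2) nu2 ->
  (forall x y, dU (f1 x) (f1 y) <= d1 x y) -> (forall x y, dU (f2 x) (f2 y) <= d2 x y) ->
  (forall x y, dV (g x) (g y) <= dU x y) ->
  dP (dPm dV) (push2 d1 dV (g \o f1) nu1) (push2 d2 dV (g \o f2) nu2)
    <= dP (dPm dU) (push2 d1 dU f1 nu1) (push2 d2 dU f2 nu2).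
Proof.
move=> [_ _ d1D] [_ _ d2D] dU_pm dV_pm fnu1 fnu2 f1_le f2_le g_le.
have [_ _ dUD] := dU_pm; have [_ _ dVD] := dV_pm.
rewrite (push2_comp f1_le g_le dUD dVD) (push2_comp f2_le g_le dUD dVD).
apply: (dP_push_le (dPm_push_mf_le g_le dUD dVD) (dPm_triangle dU_pm) (dPm_triangle dV_pm)).
- by rewrite (push2E f1_le); apply: (push_fmeasure (dPm_push_mf_le f1_le d1D dUD)).
- by rewrite (push2E f2_le); apply: (push_fmeasure (dPm_push_mf_le f2_le d2D dUD)).
Qed.

Lemma cauchy_real_seq_cvg {R : realType} (u : nat -> R) :
  (forall e, 0 < e -> exists N, forall m n, (N <= m)%N -> (N <= n)%N -> `|u m - u n| < e) ->
  exists l, forall e, 0 < e -> exists N, forall n, (N <= n)%N -> `|u n - l| < e.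
Proof.
move=> u_cauchy; have /cauchy_cvgP u_cvg : cauchy (u @ \oo).
  apply: cauchy_exP => e e0; have [N uN] := u_cauchy e e0.
  by exists (u N), N => // n /= Nn; apply: uN.
exists (lim (u @ \oo)) => e e0; have [N _ uN] := (cvgrPdist_lt _ _).1 u_cvg e e0.
by exists N => n Nn; rewrite distrC; apply: uN.
Qed.

Section Completion.
Context {R : realType} {G : Type} (rho : G -> G -> R) (g0 : G).
Hypotheses (rho0 : forall x, rho x x = 0) (rhoC : forall x y, rho x y = rho y x)
  (rhoD : forall x y z, rho x z <= rho x y + rho y z).

Let rho_ge0 x y : 0 <= rho x y.
Proof. exact: pseudometric_ge0. Qed.

Lemma dist_rho_le a b g : `|rho a g - rho b g| <= rho a b.
Proof.
have := rhoD a b g; have := rhoD b a g; rewrite (rhoC b a) => h1 h2.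
by rewrite ler_norml; apply/andP; split; lra.
Qed.

(* Points of the completion are the uniform limits of the distance functions rho a, so
   points at rho-distance 0 are identified without an explicit quotient. *)
Definition approximable (f : G -> R) :=
  forall e, 0 < e -> exists a, forall g, `|f g - rho a g| <= e.

Definition completion := {f : G -> R | approximable f}.

Definition sup_dist (f h : G -> R) : R := sup [set `|f g - h g| | g in [set: G]].

Lemma approximable_dist_bounded f h : approximable f -> approximable h ->
  exists M, forall g, `|f g - h g| <= M.
Proof.
move=> af ah; have [a fa] := af 1 ltr01; have [b hb] := ah 1 ltr01.
exists (1 + rho a b + 1) => g; have := fa g; have := hb g; have := dist_rho_le a b g.
have := ler_distD (rho a g) (f g) (h g); have := ler_distD (rho b g) (rho a g) (h g).
by rewrite (distrC (h g)); lra.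
Qed.

Lemma le_sup_dist f h g : approximable f -> approximable h -> `|f g - h g| <= sup_dist f h.
Proof.
move=> af ah; have [M fhM] := approximable_dist_bounded af ah.
by apply: ub_le_sup; [exists M => _ [x _ <-] | exists g].
Qed.

Lemma sup_dist_le f h M : (forall g, `|f g - h g| <= M) -> sup_dist f h <= M.
Proof. by move=> fhM; apply: ge_sup; [exists `|f g0 - h g0|, g0 | move=> _ [x _ <-]]. Qed.

Definition completion_dist (x y : completion) : R := sup_dist (sval x) (sval y).

Lemma le_completion_dist (x y : completion) g :
  `|sval x g - sval y g| <= completion_dist x y.
Proof. by apply: le_sup_dist; apply: svalP. Qed.

Lemma completion_dist_metric : is_metric completion_dist.
Proof.
split => [x y|x y|x y z].
- split => [xy0|->]; last first.
    apply/eqP; rewrite eq_le (le_trans (normr_ge0 _) (le_completion_dist y y g0)) andbT.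
    by apply: sup_dist_le => g; rewrite subrr normr0.
  apply: eq_sig_hprop => //; apply: funext => g; apply/eqP; rewrite -subr_eq0 -normr_le0.
  by rewrite -xy0 le_completion_dist.
- by apply/eqP; rewrite eq_le; apply/andP; split; apply: sup_dist_le => g;
    rewrite distrC le_completion_dist.
- apply: sup_dist_le => g; apply: le_trans (ler_distD (sval y g) _ _) _.
  by apply: lerD; apply: le_completion_dist.
Qed.

Lemma approximable_rho a : approximable (rho a).
Proof. by move=> e e0; exists a => g; rewrite subrr normr0 ltW. Qed.

Definition to_completion (a : G) : completion := exist _ (rho a) (approximable_rho a).

Lemma completion_dist_to_completion a b :
  completion_dist (to_completion a) (to_completion b) = rho a b.
Proof.
apply/eqP; rewrite eq_le; apply/andP; split; first by apply: sup_dist_le; apply: dist_rho_le.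
have := le_completion_dist (to_completion a) (to_completion b) b.
by rewrite /= rho0 subr0 ger0_norm ?rho_ge0.
Qed.

Lemma completion_dist_complete : mcomplete completion_dist.
Proof.
move=> u u_cauchy.
have /boolp.choice [F uF] : forall g, exists l, forall e, 0 < e ->
    exists N, forall n, (N <= n)%N -> `|sval (u n) g - l| < e.
  move=> g; apply: cauchy_real_seq_cvg => e e0; have [N uN] := u_cauchy e e0.
  by exists N => m n Nm Nn; apply: le_lt_trans (uN m n Nm Nn); apply: le_completion_dist.
have u_unif e : 0 < e -> exists N, forall m g, (N <= m)%N -> `|sval (u m) g - F g| <= e.
  move=> e0; have [N uN] := u_cauchy e e0; exists N => m g Nm.
  apply/ler_addgt0Pr => r r0; have [K uK] := uF g r r0.
  have := uN m (maxn N K) Nm (leq_maxl N K); have := uK (maxn N K) (leq_maxr N K).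
  have := le_completion_dist (u m) (u (maxn N K)) g.
  have := ler_distD (sval (u (maxn N K)) g) (sval (u m) g) (F g); lra.
have aF : approximable F.
  move=> e e0; have [|N uN] := u_unif (e / 2); first lra.
  have [|a ua] := svalP (u N) (e / 2); first lra.
  exists a => g; have := uN N g (leqnn N); have := ua g.
  have := ler_distD (sval (u N) g) (F g) (rho a g); rewrite (distrC (F g) (sval (u N) g)); lra.
exists (exist _ F aF) => e e0; have [|N uN] := u_unif (e / 2); first lra.
exists N => n Nn; have : completion_dist (u n) (exist _ F aF) <= e / 2.
  by apply: sup_dist_le => g; apply: uN.
lra.
Qed.

Hypothesis rho_separable : mseparable rho.

Lemma completion_dist_separable : mseparable completion_dist.
Proof.
case: rho_separable => D [D_countable D_dense]; exists (to_completion @` D); split.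
  exact: card_le_trans (card_image_le _ _) D_countable.
move=> x e e0; have [|a xa] := svalP x (e / 3); first lra.
have [|y Dy ay] := D_dense a (e / 3); first lra.
exists (to_completion y); first by exists y.
have : completion_dist x (to_completion y) <= e / 3 + rho a y.
  apply: sup_dist_le => g /=; apply: le_trans (ler_distD (rho a g) _ _) _.
  by apply: lerD => //; apply: dist_rho_le.
lra.
Qed.

End Completion.

Lemma completion_exists {R : realType} {G : Type} (rho : G -> G -> R) :
  G -> is_pseudometric rho -> mseparable rho ->
  exists (Z : Type) (rZ : Z -> Z -> R) (j : G -> Z),
    [/\ is_metric rZ, mcomplete rZ, mseparable rZ & isometric rho rZ j].
Proof.
move=> g0 [rho0 rhoC rhoD] rho_sep.
exists (completion rho), (@completion_dist _ _ rho), (@to_completion _ _ rho).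
by split; [exact: completion_dist_metric | exact: completion_dist_complete
  | exact: completion_dist_separable | exact: completion_dist_to_completion].
Qed.

Section Gluing.
Context {R : realType} (Z : nat -> Type) (d : forall n, Z n -> Z n -> R)
  (X : nat -> Type) (al : forall n, X n -> Z n) (be : forall n, X n.+1 -> Z n)
  (x0 : forall n, X n).
Arguments d : clear implicits.
Arguments al : clear implicits.
Arguments be : clear implicits.
Hypotheses (d0 : forall n x, d n x x = 0) (dC : forall n x y, d n x y = d n y x)
  (dD : forall n x y z, d n x z <= d n x y + d n y z).
Hypothesis d_glue : forall n x y, d n.+1 (al n.+1 x) (al n.+1 y) = d n (be n x) (be n y).

Definition glued := {n : nat & Z n}.

Inductive link : glued -> glued -> R -> Prop :=
| link_in n (a b : Z n) : link (existT Z n a) (existT Z n b) (d n a b)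
| link_up n (x : X n.+1) : link (existT Z n (be n x)) (existT Z n.+1 (al n.+1 x)) 0
| link_down n (x : X n.+1) : link (existT Z n.+1 (al n.+1 x)) (existT Z n (be n x)) 0.

(* The length index only serves the strong induction in le_chain_cost. *)
Inductive chain : nat -> glued -> glued -> R -> Prop :=
| chain0 p : chain 0 p p 0
| chainS k p q s c1 c2 : link p q c1 -> chain k q s c2 -> chain k.+1 p s (c1 + c2).

Lemma existT_inj n (a b : Z n) : existT Z n a = existT Z n b -> a = b.
Proof. exact: inj_pair2_eq_dec nat (@eq_comparable nat) Z n a b. Qed.

Lemma link_ge0 p q c : link p q c -> 0 <= c.
Proof. by case=> // n a b; have := dD a b a; rewrite d0 (dC b a); lra. Qed.

Lemma chain_ge0 k p q c : chain k p q c -> 0 <= c.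
Proof. by elim=> // {}k {}p {}q s c1 c2 /link_ge0 ? _ ?; lra. Qed.

Lemma chain1 p q c : link p q c -> chain 1 p q c.
Proof. by move=> l; rewrite -[c]addr0; apply: chainS l (chain0 q). Qed.

Lemma chain_cat k1 k2 p q s c1 c2 :
  chain k1 p q c1 -> chain k2 q s c2 -> chain (k1 + k2) p s (c1 + c2).
Proof.
elim=> [{}p|k {}p p' {}q c c' l _ IH] ch2; first by rewrite add0r.
by rewrite -addrA; apply: chainS l (IH ch2).
Qed.

Lemma link_rev p q c : link p q c -> link q p c.
Proof.
by case=> [n a b|n x|n x]; [rewrite dC; apply: link_in | apply: link_down | apply: link_up].
Qed.

Lemma chain_rev k p q c : chain k p q c -> chain k q p c.
Proof.
elim=> [{}p|{}k {}p p' {}q c1 c2 l _ IH]; first exact: chain0.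
by rewrite addrC -addn1; apply: chain_cat IH (chain1 (link_rev l)).
Qed.

Lemma link_inv p q c : link p q c ->
  [\/ exists n a b, [/\ p = existT Z n a, q = existT Z n b & c = d n a b],
      exists n x, [/\ p = existT Z n (be n x), q = existT Z n.+1 (al n.+1 x) & c = 0] |
      exists n x, [/\ p = existT Z n.+1 (al n.+1 x), q = existT Z n (be n x) & c = 0]].
Proof.
by case=> [n a b|n x|n x]; [apply: Or31; exists n, a, b | apply: Or32; exists n, x
  | apply: Or33; exists n, x].
Qed.

Lemma chain_inv k p s c : chain k p s c ->
  (k = 0%N /\ p = s /\ c = 0) \/
  exists k' q c1 c2, [/\ k = k'.+1, link p q c1, chain k' q s c2 & c = c1 + c2].
Proof. by case=> [p'|k' p' q s' c1 c2 l ch]; [left | right; exists k', q, c1, c2]. Qed.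

Lemma link_down_inv n p q c : link p q c -> (n < tag p)%N -> (tag q <= n)%N ->
  exists x, [/\ p = existT Z n.+1 (al n.+1 x), q = existT Z n (be n x) & c = 0].
Proof.
case=> [m a b|m x|m x] /= h1 h2; [lia | lia |].
have em : m = n by lia.
by subst m; exists x.
Qed.

Lemma chain_split_down n k p s c : chain k p s c -> (n < tag p)%N -> (tag s <= n)%N ->
  exists k1 k2 c1 c2 x, [/\ (k1 < k)%N, (k2 < k)%N,
    chain k1 p (existT Z n.+1 (al n.+1 x)) c1,
    chain k2 (existT Z n (be n x)) s c2 & c = c1 + c2].
Proof.
elim=> [{}p /= ? ?|{}k {}p q {}s c1 c2 l ch IH np sn]; first lia.
have [nq|qn] := ltnP n (tag q).
  have [k1 [k2 [a1 [a2 [x [lt1 lt2 ch1 ch2 ->]]]]]] := IH nq sn.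
  exists k1.+1, k2, (c1 + a1), a2, x; split => //; first exact: ltnW.
    exact: chainS l ch1.
  by rewrite addrA.
have [x [ep eq ec]] := link_down_inv l np qn; subst p q c1.
by exists 0%N, k, 0, c2, x; split => //; exact: chain0.
Qed.

Lemma chain_split_up n k p s c : chain k p s c -> (tag p <= n)%N -> (n < tag s)%N ->
  exists k1 k2 c1 c2 x, [/\ (k1 < k)%N, (k2 < k)%N,
    chain k1 p (existT Z n (be n x)) c1,
    chain k2 (existT Z n.+1 (al n.+1 x)) s c2 & c = c1 + c2].
Proof.
move=> /chain_rev ch pn ns.
have [k1 [k2 [c1 [c2 [x [lt1 lt2 ch1 ch2 ->]]]]]] := chain_split_down ch ns pn.
exists k2, k1, c2, c1, x; split => //; [exact: chain_rev | exact: chain_rev | exact: addrC].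
Qed.

Lemma le_chain_cost k n a b c : chain k (existT Z n a) (existT Z n b) c -> d n a b <= c.
Proof.
elim/ltn_ind: k n a b c => k IH n a b c /chain_inv [[_ [/existT_inj -> ->]]|]; first by rewrite d0.
move=> [k' [q [c1 [c2 [ek l ch ->]]]]]; subst k.
have [[m [a' [b' [E eq ->]]]]|[m [x [E eq ->]]]|[m [x [E eq ->]]]] := link_inv l; subst q.
- have /= em := congr1 tag E; subst m; move/existT_inj: E => <-.
  by have := IH _ (ltnSn k') _ _ _ _ ch; have := dD a b' b; lra.
- (* a chain leaving Z n upwards through x must come back down through some x' *)
  have /= em := congr1 tag E; subst m; move/existT_inj: E => ->.
  have [k1 [k2 [c3 [c4 [x' [lt1 lt2 ch1 ch2 ->]]]]]] := chain_split_down ch (ltnSn n) (leqnn n).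
  have := IH _ (ltnW lt1) _ _ _ _ ch1; rewrite d_glue.
  by have := IH _ (ltnW lt2) _ _ _ _ ch2; have := dD (be n x) (be n x') b; lra.
- have /= en := congr1 tag E; subst n; move/existT_inj: E => ->.
  have [k1 [k2 [c3 [c4 [x' [lt1 lt2 ch1 ch2 ->]]]]]] := chain_split_up ch (leqnn m) (ltnSn m).
  have := IH _ (ltnW lt1) _ _ _ _ ch1; rewrite -d_glue.
  by have := IH _ (ltnW lt2) _ _ _ _ ch2; have := dD (al m.+1 x) (al m.+1 x') b; lra.
Qed.

Definition glued_base : glued := existT Z 0%N (al 0%N (x0 0%N)).

Lemma chain_from_base n a : exists k c, chain k glued_base (existT Z n a) c.
Proof.
elim: n a => [|n IH] a.
  by exists 1%N, (d 0%N (al 0%N (x0 0%N)) a); apply: chain1; apply: link_in.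
have [k [c ch]] := IH (be n (x0 n.+1)).
exists (k + 2)%N, (c + (0 + d n.+1 (al n.+1 (x0 n.+1)) a)); apply: chain_cat ch _.
by apply: chainS; [apply: link_up | apply: chain1; apply: link_in].
Qed.

Lemma chain_exists p q : exists k c, chain k p q c.
Proof.
case: p q => [n a] [m b]; have [k1 [c1 ch1]] := chain_from_base a.
have [k2 [c2 ch2]] := chain_from_base b.
by exists (k1 + k2)%N, (c1 + c2); apply: chain_cat (chain_rev ch1) ch2.
Qed.

Definition glued_dist (p q : glued) : R := inf [set c | exists k, chain k p q c].

Lemma glued_dist_le_chain k p q c : chain k p q c -> glued_dist p q <= c.
Proof. by move=> ch; apply: ge_inf; [exists 0 => x [k' /chain_ge0] | exists k]. Qed.

Lemma glued_dist_ge p q r : (forall k c, chain k p q c -> r <= c) -> r <= glued_dist p q.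
Proof.
move=> r_le; apply: lb_le_inf => [|c [k ch]]; last exact: r_le ch.
by have [k [c ch]] := chain_exists p q; exists c, k.
Qed.

Lemma glued_dist_lt p q e : glued_dist p q < e -> exists k c, chain k p q c /\ c < e.
Proof.
have [k [c ch]] := chain_exists p q.
by move/(inf_lt (ex_intro _ c (ex_intro _ k ch))) => [c' [k' ch'] lt]; exists k', c'.
Qed.

Lemma glued_dist_pseudometric : is_pseudometric glued_dist.
Proof.
split => [p|p q|p q s].
- apply/eqP; rewrite eq_le (glued_dist_le_chain (chain0 p)).
  by apply: glued_dist_ge => k c /chain_ge0.
- by apply/eqP; rewrite eq_le; apply/andP; split; apply: glued_dist_ge => k c /chain_rev;
    apply: glued_dist_le_chain.
- apply/ler_addgt0Pr => e e0.
  have /glued_dist_lt [k1 [c1 [ch1 lt1]]] : glued_dist p q < glued_dist p q + e / 2 by lra.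
  have /glued_dist_lt [k2 [c2 [ch2 lt2]]] : glued_dist q s < glued_dist q s + e / 2 by lra.
  by have := glued_dist_le_chain (chain_cat ch1 ch2); lra.
Qed.

Lemma glued_distE n a b : glued_dist (existT Z n a) (existT Z n b) = d n a b.
Proof.
apply/eqP; rewrite eq_le (glued_dist_le_chain (chain1 (link_in a b))).
by apply: glued_dist_ge => k c; apply: le_chain_cost.
Qed.

Lemma glued_dist_link n x : glued_dist (existT Z n (be n x)) (existT Z n.+1 (al n.+1 x)) = 0.
Proof.
apply/eqP; rewrite eq_le (glued_dist_le_chain (chain1 (link_up x))).
by apply: glued_dist_ge => k c /chain_ge0.
Qed.

Lemma glued_dist_separable : (forall n, mseparable (d n)) -> mseparable glued_dist.
Proof.
move=> /(_ _)/cid-/all_sig[D /all_and2[D_countable D_dense]].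
exists (\bigcup_n (existT Z n) @` D n); split.
  apply: bigcup_countable => // n _; exact: card_le_trans (card_image_le _ _) (D_countable n).
case=> n a e e0; have [y Dy ay] := D_dense n a e e0.
by exists (existT Z n y); [exists n => //; exists y | rewrite glued_distE].
Qed.

End Gluing.

Lemma glued_completion_exists {R : realType} (Z : nat -> Type)
    (d : forall n, Z n -> Z n -> R) (X : nat -> Type)
    (al : forall n, X n -> Z n) (be : forall n, X n.+1 -> Z n) :
  (forall n, X n) -> (forall n, is_pseudometric (d n)) -> (forall n, mseparable (d n)) ->
  (forall n x y, d n.+1 (al n.+1 x) (al n.+1 y) = d n (be n x) (be n y)) ->
  exists (W : Type) (rW : W -> W -> R) (j : forall n, Z n -> W),
    [/\ is_metric rW, mcomplete rW, mseparable rW,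
        forall n, isometric (d n) rW (j n) &
        forall n x, j n (be n x) = j n.+1 (al n.+1 x)].
Proof.
move=> x0 /all_and3[d0 dC dD] d_sep d_glue.
have [W [rW [j [rW_metric rW_complete rW_sep j_iso]]]] :=
  completion_exists (glued_base al x0) (glued_dist_pseudometric al be x0 d0 dC dD)
    (glued_dist_separable x0 d0 dC dD d_glue d_sep).
exists W, rW, (fun n a => j (existT Z n a)); split => // [n a b|n x].
  by rewrite j_iso glued_distE.
by case: rW_metric => rW0 _ _; apply/rW0; rewrite j_iso glued_dist_link.
Qed.

Section DisjointUnion.
Context {R : realType} {S T : Type} (dS : S -> S -> R) (dT : T -> T -> R) (s0 : S) (t0 : T).

Definition sum_dist (p q : S + T) : R :=
  match p, q with
  | inl a, inl b => dS a b
  | inr a, inr b => dT a b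
  | inl a, inr b => dS a s0 + 1 + dT t0 b
  | inr a, inl b => dS b s0 + 1 + dT t0 a
  end.

Lemma sum_dist_pseudometric :
  is_pseudometric dS -> is_pseudometric dT -> is_pseudometric sum_dist.
Proof.
move=> dS_pm dT_pm; have dS_ge0 := pseudometric_ge0 dS_pm.
have dT_ge0 := pseudometric_ge0 dT_pm; case: dS_pm dT_pm => [S0 SC SD] [T0 TC TD].
split => [[] a|[] a [] b|[] a [] b [] c] //=; rewrite ?S0 ?T0 //; try by rewrite SC || rewrite TC.
- by have := SD a b s0; have := dT_ge0 t0 c; lra.
- by have := SD a s0 c; have := dT_ge0 t0 b; have := SC s0 c; lra.
- by have := TD t0 b c; have := dS_ge0 a s0; lra.
- by have := SD c b s0; have := dT_ge0 t0 a; have := SC c b; lra.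
- by have := TD a t0 c; have := TC a t0; have := dS_ge0 b s0; lra.
- by have := TD t0 b a; have := TC b a; lra.
Qed.

Lemma sum_dist_separable : mseparable dS -> mseparable dT -> mseparable sum_dist.
Proof.
move=> [DS [DS_countable DS_dense]] [DT [DT_countable DT_dense]].
exists (\bigcup_(i in [set: bool]) (if i then inl @` DS else inr @` DT)); split.
  apply: bigcup_countable => // -[] _.
    exact: card_le_trans (card_image_le _ _) DS_countable.
  exact: card_le_trans (card_image_le _ _) DT_countable.
case=> a e e0.
  by have [y Dy ay] := DS_dense a e e0; exists (inl y) => //; exists true => //; exists y.
by have [y Dy ay] := DT_dense a e e0; exists (inr y) => //; exists false => //; exists y.
Qed.

End DisjointUnion.

Lemma pt_inhabited {R : realType} (X : m2m R) : pt (m2m_set X).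
Proof. by have /cid[v Xv] := m2m_ne X; exists v. Qed.

Section JointEmbedding.
Context {R : realType}.

Record joint_embedding (X Y : m2m R) (e : R) := JointEmbedding {
  je_space : Type;
  je_dist : je_space -> je_space -> R;
  je_fst : pt (m2m_set X) -> je_space;
  je_snd : pt (m2m_set Y) -> je_space;
  je_metric : is_metric je_dist;
  je_separable : mseparable je_dist;
  je_fst_isometric : isometric (m2m_r X) je_dist je_fst;
  je_snd_isometric : isometric (m2m_r Y) je_dist je_snd;
  je_dP_lt : dP (dPm je_dist) (push2 (m2m_r X) je_dist je_fst (m2m_nu X))
                (push2 (m2m_r Y) je_dist je_snd (m2m_nu Y)) < e }.

Lemma d2GP_set_neq0 (X Y : m2m R) :
  [set dd : R | exists (Z : Type) (dZ : Z -> Z -> R)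
     (iX : pt (m2m_set X) -> Z) (iY : pt (m2m_set Y) -> Z),
     [/\ is_metric dZ, mcomplete dZ, mseparable dZ,
         isometric (m2m_r X) dZ iX /\ isometric (m2m_r Y) dZ iY &
         dd = dP (dPm dZ) (push2 (m2m_r X) dZ iX (m2m_nu X))
                          (push2 (m2m_r Y) dZ iY (m2m_nu Y))]] !=set0.
Proof.
have x0 := pt_inhabited X; have y0 := pt_inhabited Y.
have [Z [dZ [j [dZ_metric dZ_complete dZ_sep j_iso]]]] := completion_exists (inl x0)
  (sum_dist_pseudometric x0 y0 (metric_pseudometric (m2m_metric X))
     (metric_pseudometric (m2m_metric Y)))
  (sum_dist_separable x0 y0 (m2m_separable X) (m2m_separable Y)).
by eexists; exists Z, dZ, (j \o inl), (j \o inr); split => //; split => a b /=; rewrite j_iso.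
Qed.

Lemma d2GP_lt_joint_embedding (X Y : m2m R) e : d2GP X Y < e -> joint_embedding X Y e.
Proof.
move=> /(inf_lt (d2GP_set_neq0 X Y))/cid2[dd /cid[Z /cid[dZ /cid[iX /cid[iY]]]]].
by case=> dZ_metric _ dZ_sep [iX_iso iY_iso] -> lt_e; exact: JointEmbedding lt_e.
Qed.

End JointEmbedding.
Arguments je_dist {R X Y e} _ _ _.
Arguments je_fst {R X Y e} _ _.
Arguments je_snd {R X Y e} _ _.

Lemma glue_joint_embeddings {R : realType} (eps : nat -> R) (X : nat -> m2m R) :
  (forall n, joint_embedding (X n) (X n.+1) (eps n)) ->
  exists (Z : Type) (rZ : Z -> Z -> R) (iota : forall n, pt (m2m_set (X n)) -> Z),
    [/\ is_metric rZ, mcomplete rZ, mseparable rZ,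
        (forall n, isometric (m2m_r (X n)) rZ (iota n)) &
        (forall n,
           dP (dPm rZ) (push2 (m2m_r (X n)) rZ (iota n) (m2m_nu (X n)))
                       (push2 (m2m_r (X n.+1)) rZ (iota n.+1) (m2m_nu (X n.+1)))
           < eps n)].
Proof.
move=> C; pose d n := je_dist (C n).
have d_pm n : is_pseudometric (d n) := metric_pseudometric (je_metric (C n)).
have [Z [rZ [j [rZ_metric rZ_complete rZ_sep j_iso j_glue]]]] :=
  @glued_completion_exists _ _ d _ (fun n => je_fst (C n)) (fun n => je_snd (C n))
    (fun n => pt_inhabited (X n)) d_pm (fun n => je_separable (C n))
    (fun n x y => etrans (je_fst_isometric _ _ _) (esym (je_snd_isometric _ _ _))).
exists Z, rZ, (fun n => j n \o je_fst (C n)); split => // [n a b|n].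
  by rewrite /= j_iso /d je_fst_isometric.
have -> : j n.+1 \o je_fst (C n.+1) = j n \o je_snd (C n).
  by apply: funext => x /=; rewrite j_glue.
apply: le_lt_trans (je_dP_lt (C n)); apply: dP_push2_comp_le.
- exact: metric_pseudometric (m2m_metric _).
- exact: metric_pseudometric (m2m_metric _).
- exact: d_pm.
- exact: metric_pseudometric rZ_metric.
- exact: m2m_fm.
- exact: m2m_fm.
- exact/isometric_le/je_fst_isometric.
- exact/isometric_le/je_snd_isometric.
- exact/isometric_le/j_iso.
Qed.

Theorem mainTheorem15 (R : realType) (eps : nat -> R) (X : nat -> m2m R) :
  (forall n, 0 < eps n) ->
  (forall n, d2GP (X n) (X n.+1) < eps n) ->
  exists (Z : Type) (rZ : Z -> Z -> R)
         (iota : forall n, pt (m2m_set (X n)) -> Z),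
    [/\ is_metric rZ, mcomplete rZ, mseparable rZ,
        (forall n, isometric (m2m_r (X n)) rZ (iota n)) &
        (forall n,
           dP (dPm rZ) (push2 (m2m_r (X n)) rZ (iota n) (m2m_nu (X n)))
                       (push2 (m2m_r (X n.+1)) rZ (iota n.+1) (m2m_nu (X n.+1)))
           < eps n)].
Proof.
by move=> _ d2GP_lt; apply: glue_joint_embeddings => n; apply: d2GP_lt_joint_embedding.
Qed.
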